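(* Let $G$ be a graph, let $x$, $y$ be two vertices of $G$, and let $F_1, F_2, \ldots, F_c$ be the components of $G\setminus x\setminus y$. If $\rho^*_G(\{x,y\}, V(F_i))=2$ for all $1\le i\le c$, then $G$ has a vertex-minor isomorphic to the graph obtained from two disjoint copies of $K_c$ by adding a perfect matching between them (the $i$-th vertex of one copy joined to the $i$-th vertex of the other).
   Context: All graphs are simple. For disjoint $X,Y\subseteq V(G)$, $\rho^*_G(X,Y)$ denotes the rank over the binary field of the submatrix of the adjacency matrix of $G$ with rows indexed by $X$ and columns indexed by $Y$. A graph $H$ is a vertex-minor of $G$ if $H$ is an induced subgraph of a graph obtained from $G$ by a sequence of local complementations (local complementation at $v$ replaces the subgraph induced on the neighborhood of $v$ by its complement). *)

From HB Require Import structures.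
From mathcomp Require Import all_boot all_order all_algebra.
Set Implicit Arguments. Unset Strict Implicit. Unset Printing Implicit Defensive.
Import GRing.Theory.
Local Open Scope ring_scope.

Definition simple_graph (T : finType) (e : rel T) : Prop :=
  symmetric e /\ irreflexive e.

Definition cut_rank (T : finType) (e : rel T) (X Y : {set T}) : nat :=
  \rank (\matrix_(i < #|X|, j < #|Y|)
           ((e (enum_val i) (enum_val j))%:R : 'F_2)).

Definition local_comp (T : finType) (e : rel T) (v : T) : rel T :=
  fun a b => if [&& a != b, e v a & e v b] then ~~ e a b else e a b.

Definition local_comps (T : finType) (e : rel T) (s : seq T) : rel T :=
  foldl (@local_comp T) e s.

(* H (on U) is isomorphic to a vertex-minor of G (on T): H is isomorphic,
   via an injection f, to the subgraph of some locally-equivalent graph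
   induced on the image of f. *)
Definition has_vertex_minor (T U : finType) (e : rel T) (h : rel U) : Prop :=
  exists (s : seq T) (f : U -> T),
    injective f /\ forall u w : U, h u w = local_comps e s (f u) (f w).

Definition del2 (T : finType) (e : rel T) (x y : T) : rel T :=
  fun a b => [&& e a b, a \notin [set x; y] & b \notin [set x; y]].

Definition components_del2 (T : finType) (e : rel T) (x y : T)
  : {set {set T}} :=
  [set [set b | connect (del2 e x y) a b] | a in ~: [set x; y]].

Definition double_clique (c : nat) : rel (bool * 'I_c) :=
  fun p q => if p.1 == q.1 then p.2 != q.2 else p.2 == q.2.

From mathcomp Require Import all_boot all_order all_algebra.
From Stdlib Require Import Classical_Prop.
Import GRing.Theory.
Set Implicit Arguments. Unset Strict Implicit. Unset Printing Implicit Defensive.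

(* Call vw an xy-edge if v is adjacent to x but not y, w to y but not x, and
   v ~ w.  Rank 2 of the x,y-rows on a component F gives a neighbour of x, a
   neighbour of y and a vertex of F seeing exactly one of them; along a
   shortest path in F from such a vertex to a neighbour of the other, local
   complementation at the second vertex shortcuts the path, until an xy-edge
   appears.  These complementations stay inside F, so the other components
   are untouched and the c xy-edges are pairwise nonadjacent.  If x and y are
   nonadjacent, complementing at x and then at y turns the two ends of the
   xy-edges into two cliques; otherwise a pivot on one xy-edge first removes
   the edge xy. *)

Section LocalComplementation.
Variable T : finType.
Implicit Types (g : rel T) (s : seq T).

Lemma local_compE g c a b : local_comp g c a b =
  if [&& a != b, g c a & g c b] then ~~ g a b else g a b.
Proof. by []. Qed.

Lemma local_comp_sym g c : symmetric g -> symmetric (local_comp g c).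
Proof.
by move=> sg a b; rewrite !local_compE [b == a]eq_sym (andbC (g c b)) (sg b a).
Qed.

Lemma local_comp_irr g c : irreflexive g -> irreflexive (local_comp g c).
Proof. by move=> ig a; rewrite local_compE eqxx ig. Qed.

Lemma local_comp_nonadjl g c a b : ~~ g c a -> local_comp g c a b = g a b.
Proof. by move=> /negbTE nca; rewrite local_compE nca andbF. Qed.

Lemma local_comp_nonadjr g c a b : ~~ g c b -> local_comp g c a b = g a b.
Proof. by move=> /negbTE ncb; rewrite local_compE ncb !andbF. Qed.

Lemma local_comp_centerl g c b : irreflexive g -> local_comp g c c b = g c b.
Proof. by move=> ig; rewrite local_comp_nonadjl ?ig. Qed.

Lemma local_comp_centerr g c a : irreflexive g -> local_comp g c a c = g a c.
Proof. by move=> ig; rewrite local_comp_nonadjr ?ig. Qed.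

Lemma local_comps_cons g c s :
  local_comps g (c :: s) = local_comps (local_comp g c) s.
Proof. by []. Qed.

Lemma local_comps_cat g s1 s2 :
  local_comps g (s1 ++ s2) = local_comps (local_comps g s1) s2.
Proof. exact: foldl_cat. Qed.

Lemma local_comps_sym g s : symmetric g -> symmetric (local_comps g s).
Proof. by elim: s g => // c s IH g sg; apply/IH/local_comp_sym. Qed.

Lemma local_comps_irr g s : irreflexive g -> irreflexive (local_comps g s).
Proof. by elim: s g => // c s IH g ig; apply/IH/local_comp_irr. Qed.

Lemma pivot_nonadj g a b z t : ~~ g a z -> ~~ g b z ->
  local_comps g [:: a; b; a] z t = g z t /\ local_comps g [:: a; b; a] t z = g t z.
Proof.
move=> naz nbz; have n1 : ~~ local_comp g a b z by rewrite local_comp_nonadjr.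
have n2 : ~~ local_comp (local_comp g a) b a z by rewrite !local_comp_nonadjr.
by rewrite /= !(local_comp_nonadjl _ n2, local_comp_nonadjl _ n1, local_comp_nonadjl _ naz)
   !(local_comp_nonadjr _ n2, local_comp_nonadjr _ n1, local_comp_nonadjr _ naz).
Qed.

Lemma vertex_minor_local_comps (U : finType) g s (h : rel U) :
  has_vertex_minor (local_comps g s) h -> has_vertex_minor g h.
Proof.
by case=> s' [f [f_inj hf]]; exists (s ++ s'), f; split=> // u w; rewrite local_comps_cat.
Qed.

Definition agree_on (R : {set T}) g1 g2 :=
  forall a b, (a \in R) || (b \in R) -> g1 a b = g2 a b.

Lemma agree_on_local_comps R g1 g2 s : agree_on R g1 g2 -> all (mem R) s ->
  agree_on R (local_comps g1 s) (local_comps g2 s).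
Proof.
elim: s g1 g2 => // c s IH g1 g2 ag /= /andP [cR sR]; apply: IH => // a b ab.
by rewrite !local_compE !(ag c) ?cR // (ag a b).
Qed.

End LocalComplementation.

Lemma sub_path_targets (T : eqType) (e e' : rel T) z s :
  (forall c d, d \in s -> e c d -> e' c d) -> path e z s -> path e' z s.
Proof.
elim: s z => //= d s IH z ee' /andP [ezd ps]; rewrite ee' ?mem_head //=.
by apply: IH ps => c d' d's; apply: ee'; rewrite in_cons d's orbT.
Qed.

Lemma path_suffix_at (T : eqType) (g : rel T) (P : pred T) a q z : z \in q ->
  exists q2, [/\ path g a q -> path g z q2, all P q -> all P (z :: q2),
                  last a q = last z q2 & size q2 < size q].
Proof.
case/splitPr => q1 q2; exists q2; split.
- by rewrite cat_path => /andP [_ /= /andP [_ ->]].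
- by rewrite all_cat => /andP [_ ->].
- by rewrite last_cat.
- by rewrite size_cat /= addnS ltnS leq_addl.
Qed.

Lemma uniq_splitP (T : eqType) (s : seq T) z : uniq s -> z \in s ->
  exists s1 s2, s = s1 ++ z :: s2 /\ z \notin s1 ++ s2.
Proof.
move=> + zs; case/splitPr: zs => s1 s2.
rewrite cat_uniq /= => /and3P [_ /norP [nz1 _] /andP [nz2 _]].
by exists s1, s2; rewrite mem_cat negb_or nz1 nz2.
Qed.

Section XYEdge.
Variables (T : finType) (x y : T) (F : {set T}).
Implicit Types (g : rel T).

Definition xy_edge g v w := [&& g x v, ~~ g y v, g y w, ~~ g x w & g v w].

Definition xy_path g u p :=
  [&& u \in F, all (mem F) p, path g u p, g x u, ~~ g y u & g y (last u p)].

Definition xy_edge_reachable g := exists s v w,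
  [&& all (mem F) s, v \in F, w \in F & xy_edge (local_comps g s) v w].

Lemma xy_path1_reachable g u a : symmetric g -> irreflexive g ->
  xy_path g u [:: a] -> xy_edge_reachable g.
Proof.
move=> sg ig /and5P [uF /= /andP [aF _] /andP [eua _] exu /andP [nyu eya]].
case exa: (g x a); last first.
  by exists [::], u, a; rewrite /= uF aF /xy_edge exu nyu eya exa eua.
exists [:: u], u, a; rewrite /= uF aF /xy_edge /=.
rewrite !local_comp_centerr // !local_comp_centerl // exu nyu eua /=.
have xa : x != a by apply: contraTneq exa => ->; rewrite ig.
rewrite local_compE (sg u y) (negbTE nyu) eya andbF /=.
by rewrite local_compE (sg u x) eua exu exa xa.
Qed.

(* By minimality, a is adjacent to neither x nor y and, among the vertices of
   the path, only to u and b; so complementing at a adds the edge ub and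
   changes nothing else along the rest of the path. *)
Lemma minimal_xy_path_pivot g u a b p : symmetric g -> irreflexive g ->
  xy_path g u [:: a, b & p] ->
  (forall u' q, xy_path g u' q -> (size p).+2 <= size q) ->
  a \in F /\ xy_path (local_comp g a) u (b :: p).
Proof.
move=> sg ig /and5P [uF /= /and3P [aF bF pF] /and3P [eua eab pb] exu /andP [nyu ylast]].
move=> minp; have shorter u' q : xy_path g u' q -> size q < (size p).+2 -> False.
  by move=> /minp; rewrite leqNgt => /negP.
have nya : ~~ g y a.
  by apply/negP => eya; apply: (shorter u [:: a]); rewrite //= /xy_path /= uF aF eua exu nyu eya.
have nxa : ~~ g x a.
  apply/negP => exa; apply: (shorter a (b :: p)); last by [].
  by rewrite /xy_path /= aF bF pF eab pb exa nya.
have nua z : z \in b :: p -> ~~ g u z.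
  move=> /(path_suffix_at g (mem F) a) [q [hp hF hl hs]]; apply/negP => euz.
  apply: (shorter u (z :: q)); last by move: hs => /=; rewrite !ltnS.
  have zqF : all (mem F) (z :: q) by apply: hF; rewrite /= bF.
  have zqp : path g z q by apply: hp; rewrite /= eab.
  by rewrite /xy_path uF zqF /= euz zqp exu nyu -hl ylast.
have nap z : z \in p -> ~~ g a z.
  move=> /(path_suffix_at g (mem F) b) [q [hp hF hl hs]]; apply/negP => eaz.
  apply: (shorter u [:: a, z & q]); last by move: hs => /=; rewrite !ltnS.
  have /andP [zF qF] : (z \in F) && all (mem F) q by exact: hF.
  by rewrite /xy_path uF /= aF zF qF eua eaz hp // exu nyu -hl ylast.
have nub : u != b.
  apply: contraTneq ylast => ub; subst b; apply/negP => ylast.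
  by apply: (shorter u p); rewrite // /xy_path uF pF pb exu nyu ylast.
split=> //; rewrite /xy_path uF /= bF pF /=.
rewrite local_compE nub sg eua eab /= (nua b) ?mem_head //=.
rewrite (sub_path_targets (e := g)) ?pb //; last first.
  by move=> c d dp; rewrite local_comp_nonadjr ?nap.
have nax : ~~ g a x by rewrite sg.
have nay : ~~ g a y by rewrite sg.
by rewrite !(local_comp_nonadjl _ nax) !(local_comp_nonadjl _ nay) exu nyu ylast.
Qed.

Lemma xy_path_edge_within g u p : symmetric g -> irreflexive g ->
  xy_path g u p -> xy_edge_reachable g.
Proof.
move: {2}(size p) (leqnn (size p)) => n; elim: n g u p => [|n IH] g u p.
  by case: p => // _ _ _ /and5P [_ _ _ _ /andP [/negP]].
move=> sp sg ig uxy.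
have [[u' [q [lt qxy]]]|minp] := classic (exists u' q, size q < size p /\ xy_path g u' q).
  by apply: (IH g u' q) => //; rewrite -ltnS (leq_trans lt).
case: p sp uxy minp => [|a [|b p]] sp uxy minp.
- by move: uxy => /and5P [_ _ _ _ /andP [/negP]].
- exact: xy_path1_reachable uxy.
have minp' u' q : xy_path g u' q -> (size p).+2 <= size q.
  by move=> qxy; rewrite leqNgt; apply/negP => lt; apply: minp; exists u', q.
have [aF axy] := minimal_xy_path_pivot sg ig uxy minp'.
have [s [v [w H]]] := IH _ u (b :: p) sp (local_comp_sym a sg) (local_comp_irr a ig) axy.
by exists (a :: s), v, w; rewrite /= aF.
Qed.

End XYEdge.

Section DoubleClique.
Variables (T : finType) (x y : T).
Implicit Types (g : rel T).

Lemma xy_edgeP g a b : xy_edge x y g a b ->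
  [/\ g x a, g y a = false, g y b, g x b = false & g a b].
Proof. by case/and5P => -> /negbTE -> -> /negbTE -> ->. Qed.

Definition matched_xy_edges g c (v w : 'I_c -> T) :=
  [/\ forall i, xy_edge x y g (v i) (w i),
      forall i, (v i != y) && (w i != x) &
      forall i j, i != j -> [&& ~~ g (v i) (v j), ~~ g (w i) (w j) & ~~ g (v i) (w j)]].

Lemma matched_xy_edges_inj g c (v w : 'I_c -> T) : matched_xy_edges g v w ->
  [/\ injective v, injective w & forall i j, v i != w j].
Proof.
case=> hp _ hc; split.
- move=> i j vij; apply/eqP; case/xy_edgeP: (hp j) => _ _ _ _.
  by apply: contraTT => /hc; rewrite vij => /and3P [_ _ /negbTE ->].
- move=> i j wij; apply/eqP; case/xy_edgeP: (hp i) => _ _ _ _.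
  by apply: contraTT => /hc; rewrite wij => /and3P [_ _ /negbTE ->].
- move=> i j; case/xy_edgeP: (hp i) => xvi _ _ _ _.
  by apply: contraTneq xvi => ->; case/xy_edgeP: (hp j) => _ _ _ ->.
Qed.

Lemma matched_double_clique_nonadj g c (v w : 'I_c -> T) :
  symmetric g -> irreflexive g -> ~~ g x y -> matched_xy_edges g v w ->
  has_vertex_minor g (@double_clique c).
Proof.
move=> sg ig nxy H; have [vi wi vw] := matched_xy_edges_inj H; case: H => hp _ hc.
exists [:: x; y], (fun p => if p.1 then w p.2 else v p.2); split.
  move=> [[] i] [[] j] /= e1.
  - by rewrite (wi _ _ e1).
  - by move: (vw j i); rewrite e1 eqxx.
  - by move: (vw i j); rewrite e1 eqxx.
  - by rewrite (vi _ _ e1).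
have g1y a : local_comp g x y a = g y a by rewrite local_comp_nonadjl.
move=> [[] i] [[] j]; rewrite /double_clique /local_comps /= local_compE !g1y.
- case/xy_edgeP: (hp i) => _ _ ywi xwi _; case/xy_edgeP: (hp j) => _ _ ywj xwj _.
  rewrite ywi ywj !andbT !local_comp_nonadjl ?xwi //.
  have [<-|nij] := eqVneq i j; first by rewrite eqxx ig.
  by rewrite (inj_eq wi) nij; case/and3P: (hc i j nij) => _ /negbTE ->.
- case/xy_edgeP: (hp i) => _ _ _ xwi _; case/xy_edgeP: (hp j) => _ yvj _ _ _.
  rewrite yvj !andbF /= local_comp_nonadjl ?xwi // sg.
  have [<-|nij] := eqVneq i j; first by case/xy_edgeP: (hp i) => _ _ _ _ ->.
  by case/and3P: (hc j i ltac:(by rewrite eq_sym)) => _ _ /negbTE ->.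
- case/xy_edgeP: (hp i) => _ yvi _ _ _; case/xy_edgeP: (hp j) => _ _ _ xwj _.
  rewrite yvi /= local_comp_nonadjr ?xwj // andbF.
  have [<-|nij] := eqVneq i j; first by case/xy_edgeP: (hp i) => _ _ _ _ ->.
  by case/and3P: (hc i j nij) => _ _ /negbTE ->.
- case/xy_edgeP: (hp i) => xvi yvi _ _ _; case/xy_edgeP: (hp j) => xvj _ _ _ _.
  rewrite yvi /= local_compE xvi xvj !andbT.
  have [<-|nij] := eqVneq i j; first by rewrite eqxx ig.
  by rewrite (inj_eq vi) nij; case/and3P: (hc i j nij) => /negbTE ->.
Qed.

Lemma pivot_xy_edge g a b : symmetric g -> irreflexive g -> g x y ->
  xy_edge x y g a b -> a != y -> b != x ->
  xy_edge x y (local_comps g [:: a; b; a]) b a && ~~ local_comps g [:: a; b; a] x y.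
Proof.
move=> sg ig gxy /xy_edgeP [xa ya yb xb ab] nay nbx.
have nxy : x != y by apply: contraTneq gxy => ->; rewrite ig.
have nax : a != x by apply: contraTneq xa => ->; rewrite ig.
have nby : b != y by apply: contraTneq yb => ->; rewrite ig.
set h1 := local_comp g a; set h2 := local_comp h1 b.
have sh1 : symmetric h1 := local_comp_sym a sg.
have ih1 : irreflexive h1 := local_comp_irr a ig.
have sh2 : symmetric h2 := local_comp_sym b sh1.
have h1xb : h1 x b by rewrite /h1 local_compE (sg a x) xa ab eq_sym nbx /= xb.
have h1xy : h1 x y by rewrite /h1 local_compE (sg a y) ya !andbF.
have h1yb : h1 y b by rewrite /h1 local_comp_nonadjl // sg ya.
have h1ba : h1 b a by rewrite /h1 local_comp_centerr // sg.
have h1xa : h1 x a by rewrite /h1 local_comp_centerr.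
have h1ya : h1 y a = false by rewrite /h1 local_comp_centerr.
have h2xa : h2 x a = false.
  by rewrite /h2 local_compE eq_sym nax (sh1 b x) h1xb h1ba h1xa.
have h2ya : h2 y a by rewrite /h2 local_compE eq_sym nay (sh1 b y) h1yb h1ba h1ya.
have h2by : h2 b y by rewrite /h2 local_comp_centerl // sh1.
have h2ba : h2 b a by rewrite /h2 local_comp_centerl.
have nh2ax : ~~ h2 a x by rewrite sh2 h2xa.
have ih2 : irreflexive h2 := local_comp_irr b ih1.
have h2xb : h2 x b by rewrite /h2 local_comp_centerr.
have h2xy : h2 x y = false.
  by rewrite /h2 local_compE nxy (sh1 b x) h1xb (sh1 b y) h1yb h1xy.
have h3yb : local_comp h2 a y b = false.
  by rewrite local_compE eq_sym nby (sh2 a y) h2ya (sh2 a b) h2ba sh2 h2by.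
rewrite /xy_edge /= -/h1 -/h2 h3yb !local_comp_centerr //.
by rewrite !(local_comp_nonadjl _ nh2ax) h2xb h2ya h2xa h2ba h2xy.
Qed.

Lemma matched_xy_edges_nonadj g c (v w : 'I_c -> T) : symmetric g ->
  matched_xy_edges g v w -> forall i j p q, i != j ->
  p \in [:: v i; w i] -> q \in [:: v j; w j] -> ~~ g p q.
Proof.
move=> sg [_ _ hc] i j p q nij; rewrite !inE.
have /and3P [nvv nww nvw] := hc i j nij.
have /and3P [_ _ nwv] := hc j i ltac:(by rewrite eq_sym).
by move=> /orP [] /eqP -> /orP [] /eqP ->; rewrite // sg.
Qed.

Lemma matched_xy_edges_pivot g n (v w : 'I_n.+1 -> T) :
  symmetric g -> irreflexive g -> g x y -> matched_xy_edges g v w ->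
  let h := local_comps g [:: v ord0; w ord0; v ord0] in
  ~~ h x y /\ matched_xy_edges h (fun i => if i == ord0 then w ord0 else v i)
                                 (fun i => if i == ord0 then v ord0 else w i).
Proof.
move=> sg ig gxy M h; have nonadj := matched_xy_edges_nonadj sg M.
case: (M) => hp hn hc; have /andP [nay nbx] := hn ord0.
have /andP [piv nhxy] := pivot_xy_edge sg ig gxy (hp ord0) nay nbx.
have far i z t : i != ord0 -> z \in [:: v i; w i] -> h z t = g z t /\ h t z = g t z.
  move=> ni zi; have n0i : ord0 != i by rewrite eq_sym.
  by apply: pivot_nonadj; apply: (nonadj ord0 i); rewrite // !inE eqxx ?orbT.
have vi i : v i \in [:: v i; w i] by rewrite inE eqxx.
have wi i : w i \in [:: v i; w i] by rewrite !inE eqxx orbT.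
split=> //; split=> [i|i|i j nij] /=.
- case: (eqVneq i ord0) => [_|ni]; first exact: piv.
  rewrite /xy_edge !(proj2 (far _ _ x ni (vi i))) !(proj2 (far _ _ y ni (vi i))).
  rewrite !(proj2 (far _ _ x ni (wi i))) !(proj2 (far _ _ y ni (wi i))).
  by rewrite (proj1 (far _ _ (w i) ni (vi i))); exact: hp.
- case: (eqVneq i ord0) => [_|_]; last exact: hn.
  case/xy_edgeP: (hp ord0) => xa _ yb _ _.
  by apply/andP; split; [apply: contraTneq yb => ->|apply: contraTneq xa => ->]; rewrite ig.
have swap_mem k : (if k == ord0 then w ord0 else v k) \in [:: v k; w k] /\
                  (if k == ord0 then v ord0 else w k) \in [:: v k; w k].
  by case: (eqVneq k ord0) => [->|_]; split; rewrite !inE eqxx ?orbT.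
have hnonadj p q : p \in [:: v i; w i] -> q \in [:: v j; w j] -> ~~ h p q.
  move=> pi qj; have [i0|ni] := eqVneq i ord0.
    have nj : j != ord0 by rewrite -i0 eq_sym.
    by rewrite (proj2 (far _ _ p nj qj)); apply: (nonadj i j).
  by rewrite (proj1 (far _ _ q ni pi)); apply: (nonadj i j).
by rewrite !hnonadj ?(proj1 (swap_mem i)) ?(proj2 (swap_mem i))
  ?(proj1 (swap_mem j)) ?(proj2 (swap_mem j)).
Qed.

Lemma matched_double_clique g c (v w : 'I_c -> T) :
  symmetric g -> irreflexive g -> matched_xy_edges g v w ->
  has_vertex_minor g (@double_clique c).
Proof.
move=> sg ig M; have [gxy|nxy] := boolP (g x y); last exact: matched_double_clique_nonadj M.
case: c v w M => [|n] v w M; first by exists [::], (fun _ => x); split=> [[? []]|[? []]].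
have [nhxy Mh] := matched_xy_edges_pivot sg ig gxy M.
apply: vertex_minor_local_comps; apply: matched_double_clique_nonadj Mh => //.
  exact: local_comps_sym.
exact: local_comps_irr.
Qed.

End DoubleClique.

Lemma xy_edge_swap (T : finType) (x y : T) g v w : symmetric g ->
  xy_edge y x g v w = xy_edge x y g w v.
Proof.
move=> sg; rewrite /xy_edge (sg v w).
by case: (g y v); case: (g x v); case: (g x w); case: (g y w); case: (g w v).
Qed.

Lemma xy_edge_agree_on (T : finType) (x y : T) (R : {set T}) g1 g2 v w :
  agree_on R g1 g2 -> v \in R -> w \in R -> xy_edge x y g1 v w = xy_edge x y g2 v w.
Proof. by move=> ag vR wR; rewrite /xy_edge !ag ?vR ?wR ?orbT. Qed.

Lemma mxrank_outer_le1 (K : fieldType) m n (M : 'M[K]_(m, n)) (a : 'I_m -> K)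
    (r : 'I_n -> K) :
  (forall i j, M i j = (a i * r j)%R) -> \rank M <= 1.
Proof.
move=> hM; have -> : M = mulmx (\col_i a i) (\row_j r j).
  by apply/matrixP => i j; rewrite !mxE big_ord1 !mxE hM.
exact: leq_trans (mxrankM_maxl _ _) (rank_leq_col _).
Qed.

Lemma cut_rank_le1 (T : finType) (g : rel T) (X Y : {set T}) (a r : T -> 'F_2) :
  {in X & Y, forall z t, ((g z t)%:R = a z * r t)%R} -> cut_rank g X Y <= 1.
Proof.
move=> h; apply: (@mxrank_outer_le1 _ _ _ _ (a \o enum_val) (r \o enum_val)).
by move=> i j; rewrite mxE h ?enum_valP.
Qed.

Section Components.
Variables (T : finType) (e : rel T) (x y : T).
Hypotheses (sym_e : symmetric e) (irr_e : irreflexive e).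
Implicit Types (g : rel T) (F : {set T}).
Local Notation S := [set x; y].
Local Notation C := (components_del2 e x y).
Local Notation d := (del2 e x y).

Lemma del2_sym : symmetric d.
Proof.
move=> a b; rewrite /del2 (sym_e a b).
by case: (a \in S); case: (b \in S); rewrite /= ?andbF.
Qed.

Lemma del2_sub : subrel d e.
Proof. by move=> a b /and3P []. Qed.

Lemma connect_del2_sym : connect_sym d.
Proof. exact: sym_connect_sym del2_sym. Qed.

Lemma connect_del2_notin a b : a \notin S -> connect d a b -> b \notin S.
Proof.
rewrite connect_del2_sym => aS /connectP [[|c p] /= pp ab]; first by rewrite -ab.
by case/andP: pp => /and3P [].
Qed.

Lemma componentP F : F \in C -> exists2 a, a \notin S & F = [set b | connect d a b].
Proof. by case/imsetP => a; rewrite inE => aS ->; exists a. Qed.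

Lemma component_notin F z : F \in C -> z \in F -> z \notin S.
Proof. by case/componentP => a aS ->; rewrite inE; apply: connect_del2_notin. Qed.

Lemma component_edge F z t : F \in C -> z \in F -> e z t -> (t \in F) || (t \in S).
Proof.
move=> FC zF ezt; have [//|tS] := boolP (t \in S); first by rewrite orbT.
have zS := component_notin FC zF.
case/componentP: FC zF => a _ ->; rewrite !inE => az.
by rewrite (connect_trans az) // connect1 // /del2 ezt zS.
Qed.

Lemma component_eq F1 F2 z : F1 \in C -> F2 \in C -> z \in F1 -> z \in F2 -> F1 = F2.
Proof.
case/componentP => a1 _ ->; case/componentP => a2 _ ->; rewrite !inE => c1 c2.
apply/setP => t; rewrite !inE; apply/idP/idP => /(connect_trans _); apply.
  by rewrite (connect_trans c2) // connect_del2_sym.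
by rewrite (connect_trans c1) // connect_del2_sym.
Qed.

Lemma component_cover z : z \notin S -> exists2 F, F \in C & z \in F.
Proof.
move=> zS; exists [set b | connect d z b]; last by rewrite inE connect0.
by apply/imsetP; exists z; rewrite // inE.
Qed.

Lemma component_path F u w : F \in C -> u \in F -> w \in F ->
  exists p, [&& path e u p, all (mem F) p & last u p == w].
Proof.
case/componentP => a _ ->; rewrite !inE => au aw.
have /connectP [p pp ->] : connect d u w.
  by rewrite (connect_trans _ aw) // connect_del2_sym.
exists p; rewrite eqxx andbT (sub_path del2_sub pp); apply/allP => z zp.
by rewrite /= inE (connect_trans au) // (path_connect pp) // in_cons zp orbT.
Qed.

Definition respects_components g := [/\ symmetric g, irreflexive g &
  forall F z t, F \in C -> z \in F -> g z t -> (t \in F) || (t \in S)].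

Lemma respects_components_e : respects_components e.
Proof. by split=> // F z t; apply: component_edge. Qed.

Lemma respects_components_nonadj g v F a : respects_components g ->
  v \notin S -> F \in C -> v \notin F -> a \in F -> ~~ g v a.
Proof.
case=> _ _ cl vS FC vF aF; apply/negP => gva.
have [Fv FvC vFv] := component_cover vS.
case/orP: (cl _ _ _ FvC vFv gva) => [aFv|aS].
  by move: vF; rewrite -(component_eq FvC FC aFv aF) vFv.
by move: (component_notin FC aF); rewrite aS.
Qed.

Lemma respects_components_local_comp g v : respects_components g -> v \notin S ->
  respects_components (local_comp g v).
Proof.
move=> R vS; have [sg ig cl] := R.
split; [exact: local_comp_sym | exact: local_comp_irr|].
move=> F z t FC zF; have [vF|vF] := boolP (v \in F); last first.
  by rewrite local_comp_nonadjl ?(respects_components_nonadj R vS FC vF zF) //; apply: cl.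
rewrite local_compE; case: ifP => [/and3P [_ _ gvt] _|_]; last exact: cl.
exact: cl FC vF gvt.
Qed.

Lemma respects_components_local_comps g s : respects_components g ->
  all [pred v | v \notin S] s -> respects_components (local_comps g s).
Proof.
elim: s g => // v s IH g R /andP [vS sS]; apply: IH sS.
exact: respects_components_local_comp.
Qed.

Lemma agree_on_local_comps_outside g s F : respects_components g -> F \in C ->
  all [pred v | (v \notin S) && (v \notin F)] s -> agree_on F (local_comps g s) g.
Proof.
elim: s g => // v s IH g R FC /andP [/andP [vS vF] sS] a b abF.
have R' := respects_components_local_comp R vS.
rewrite local_comps_cons (IH _ R' FC sS _ _ abF).
have [aF|aF] := boolP (a \in F).
  by rewrite local_comp_nonadjl // (respects_components_nonadj R vS FC vF aF).
rewrite /= (negbTE aF) in abF.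
by rewrite local_comp_nonadjr // (respects_components_nonadj R vS FC vF abF).
Qed.

Lemma cut_rank2_witnesses F : cut_rank e S F = 2 ->
  [/\ exists2 u, u \in F & e x u, exists2 u, u \in F & e y u &
      exists2 u, u \in F & e x u != e y u].
Proof.
move=> r2; have rank1 (a r : T -> 'F_2) :
    {in S & F, forall z t, ((e z t)%:R = a z * r t)%R} -> False.
  by move/cut_rank_le1; rewrite r2.
have nbr u : u \in S -> exists2 t, t \in F & e u t.
  move=> uS; have [/exists_inP //|] := boolP [exists t in F, e u t].
  rewrite negb_exists_in => /forall_inP nu; exfalso.
  apply: (rank1 (fun z => (z != u)%:R%R) (fun t => (e x t || e y t)%:R%R)) => z t zS tF.
  have [->|zu] := eqVneq z u; first by rewrite (negbTE (nu t tF)) mul0r.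
  rewrite mul1r; move/negbTE: (nu t tF) => eut.
  by case/set2P: zS zu eut => ->; case/set2P: uS => ->; rewrite ?eqxx // => _ ->; rewrite ?orbF.
split; [exact: nbr (set21 x y) | exact: nbr (set22 x y) |].
have [/exists_inP //|] := boolP [exists t in F, e x t != e y t].
rewrite negb_exists_in => /forall_inP exy; exfalso.
apply: (rank1 (fun _ => 1%R) (fun t => (e x t)%:R%R)) => z t zS tF; rewrite mul1r.
by case/set2P: zS => -> //; rewrite (eqP (negPn (exy t tF))).
Qed.

Lemma component_xy_edge_reachable F : F \in C -> cut_rank e S F = 2 ->
  xy_edge_reachable x y F e.
Proof.
move=> FC /cut_rank2_witnesses [[u1 u1F xu1] [u2 u2F yu2] [u3 u3F xy3]].
case exu3: (e x u3) in xy3.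
  have nyu3 : ~~ e y u3 by case: (e y u3) xy3.
  have [p /and3P [pp pF /eqP pl]] := component_path FC u3F u2F.
  apply: (@xy_path_edge_within _ x y F e u3 p sym_e irr_e).
  by rewrite /xy_path u3F pF pp exu3 nyu3 pl yu2.
have yu3 : e y u3 by case: (e y u3) xy3.
have [p /and3P [pp pF /eqP pl]] := component_path FC u3F u1F.
have [|s [v [w /and4P [sF vF wF vw]]]] :=
  @xy_path_edge_within _ y x F e u3 p sym_e irr_e.
  by rewrite /xy_path u3F pF pp yu3 exu3 pl xu1.
by exists s, w, v; rewrite sF vF wF -xy_edge_swap //; apply: local_comps_sym.
Qed.

Definition component_seq (s : {set T} -> seq T) := flatten [seq s F | F <- enum C].

Lemma agree_on_component_seq s F : (forall F', F' \in C -> all (mem F') (s F')) ->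
  F \in C -> agree_on F (local_comps e (component_seq s)) (local_comps e (s F)).
Proof.
move=> sC FC.
have [l1 [l2 [eC nFl]]] := uniq_splitP (enum_uniq (mem C)) (etrans (mem_enum _ _) FC).
have outside l : F \notin l -> {subset l <= C} ->
    all [pred v | (v \notin S) && (v \notin F)] (flatten [seq s F' | F' <- l]).
  move=> nFl' lC; apply/allP => z /flatten_mapP [F' F'l zF'].
  have F'C := lC F' F'l.
  have {}zF' : z \in F' := allP (sC F' F'C) z zF'.
  rewrite /= (component_notin F'C zF'); apply: contraNN nFl' => zF.
  by rewrite (component_eq FC F'C zF zF').
have inC F' : F' \in l1 ++ l2 -> F' \in C.
  by rewrite mem_cat => F'l; rewrite -mem_enum eC mem_cat in_cons; case/orP: F'l => ->; rewrite ?orbT.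
move: nFl; rewrite mem_cat negb_or => /andP [nF1 nF2].
have pre : all [pred v | (v \notin S) && (v \notin F)] (flatten [seq s F' | F' <- l1]).
  by apply: outside nF1 _ => F' F'l; apply: inC; rewrite mem_cat F'l.
have post : all [pred v | (v \notin S) && (v \notin F)] (flatten [seq s F' | F' <- l2]).
  by apply: outside nF2 _ => F' F'l; apply: inC; rewrite mem_cat F'l orbT.
have notS l : all [pred v | (v \notin S) && (v \notin F)] l -> all [pred v | v \notin S] l.
  by apply: sub_all => v /andP [].
rewrite /component_seq eC map_cat flatten_cat /= !local_comps_cat.
set g0 := local_comps e _.
have R0 : respects_components g0.
  exact: respects_components_local_comps respects_components_e (notS _ pre).
have sFS : all [pred v | v \notin S] (s F).
  by apply/allP => v /(allP (sC F FC)); apply: component_notin.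
have R1 := respects_components_local_comps R0 sFS.
move=> a b abF; rewrite (agree_on_local_comps_outside R1 FC _ abF) //.
apply: agree_on_local_comps (sC F FC) _ _ abF.
exact: agree_on_local_comps_outside respects_components_e FC _.
Qed.

Lemma respects_components_cross g F1 F2 p q : respects_components g ->
  F1 \in C -> F2 \in C -> F1 != F2 -> p \in F1 -> q \in F2 -> ~~ g p q.
Proof.
case=> _ _ cl F1C F2C nF pF1 qF2; apply/negP => /(cl _ _ _ F1C pF1) /orP [qF1|qS].
  by rewrite (component_eq F1C F2C qF1 qF2) eqxx in nF.
by move: (component_notin F2C qF2); rewrite qS.
Qed.

Lemma components_xy_edges : (forall F, F \in C -> cut_rank e S F = 2) ->
  exists s (v w : {set T} -> T), respects_components (local_comps e s) /\
    forall F, F \in C -> [&& v F \in F, w F \in F & xy_edge x y (local_comps e s) (v F) (w F)].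
Proof.
move=> rk; have /fin_all_exists [f hf] : forall F, exists t : seq T * T * T, F \in C ->
    [&& all (mem F) t.1.1, t.1.2 \in F, t.2 \in F & xy_edge x y (local_comps e t.1.1) t.1.2 t.2].
  move=> F; have [FC|_] := boolP (F \in C); last by exists ([::], x, x).
  by have [s [v [w H]]] := component_xy_edge_reachable FC (rk F FC); exists (s, v, w).
have sC F : F \in C -> all (mem F) (f F).1.1 by move=> /hf /and4P [].
exists (component_seq (fun F => (f F).1.1)), (fun F => (f F).1.2), (fun F => (f F).2).
split=> [|F FC].
  apply: respects_components_local_comps respects_components_e _.
  apply/allP => z /flatten_mapP [F FC zF].
  by rewrite mem_enum in FC; apply: component_notin FC (allP (sC F FC) z zF).
have /and4P [_ vF wF vw] := hf F FC.
by rewrite vF wF (xy_edge_agree_on x y (agree_on_component_seq sC FC)).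
Qed.

Lemma components_matched_xy_edges g (v w : {set T} -> T) : respects_components g ->
  (forall F, F \in C -> [&& v F \in F, w F \in F & xy_edge x y g (v F) (w F)]) ->
  matched_xy_edges x y g (fun i : 'I_#|C| => v (enum_val i)) (fun i => w (enum_val i)).
Proof.
move=> R hvw; have FC (i : 'I_#|C|) : enum_val i \in C by exact: enum_valP.
split=> [i|i|i j nij]; have /and3P [vF wF vw] := hvw _ (FC i) => //.
  have := component_notin (FC i) vF; have := component_notin (FC i) wF.
  by rewrite !inE !negb_or => /andP [-> _] /andP [_ ->].
have nF : enum_val i != enum_val j by rewrite (inj_eq enum_val_inj).
have /and3P [vF' wF' _] := hvw _ (FC j).
by rewrite !(respects_components_cross R (FC i) (FC j) nF).
Qed.

End Components.

Theorem lemma7p7 (T : finType) (e : rel T) (x y : T) :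
  simple_graph e ->
  (forall F, F \in components_del2 e x y -> cut_rank e [set x; y] F = 2%N) ->
  has_vertex_minor e (@double_clique #|components_del2 e x y|).
Proof.
move=> [sym_e irr_e] rank2.
have [s [v [w [R hvw]]]] := components_xy_edges sym_e irr_e rank2.
apply: (vertex_minor_local_comps (s := s)).
have [sR iR _] := R.
exact: matched_double_clique sR iR (components_matched_xy_edges sym_e R hvw).
Qed.
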